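(* Let $A$ be a linearly ordered set, $a\in A$, and $H$ a passable game over $A$. Then (a) $[a]\lhd H$ or $H\le[a]$; and (b) $H\lhd[a]$ or $[a]\le H$.
   Context: Games over a poset $A$ are defined inductively: for each $a\in A$ there is an atomic game $[a]$, which has no options; and if $L$ and $R$ are non-empty sets of games, then $\{L\mid R\}$ is a composite game with left options $L$ and right options $R$. The relations $\le$ and $\lhd$ are defined by simultaneous recursion: $G\le H$ iff (1) every left option $G^L$ of $G$ satisfies $G^L\lhd H$, (2) every right option $H^R$ of $H$ satisfies $G\lhd H^R$, and (3) if $G$ or $H$ is atomic then $G\lhd H$; and $G\lhd H$ iff (1) some right option $G^R$ of $G$ satisfies $G^R\le H$, or (2) some left option $H^L$ of $H$ satisfies $G\le H^L$, or (3) $G=[a]$, $H=[b]$ are atomic and $a\le b$. A game $G$ is passable if $G\lhd G$ and recursively all its options are passable. *)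

From HB Require Import structures.
From mathcomp Require Import all_boot all_order.
Set Implicit Arguments. Unset Strict Implicit. Unset Printing Implicit Defensive.
Import Order.TTheory.
Local Open Scope order_scope.

(* Games over a poset A.  A composite game {L | R} is given by two non-empty
   families of options (indexed by arbitrary types IL, IR). *)
Inductive game (d : Order.disp_t) (A : porderType d) : Type :=
  | Atom : A -> game A
  | Comp : forall (IL : Type), (IL -> game A) -> inhabited IL ->
           forall (IR : Type), (IR -> game A) -> inhabited IR -> game A.

Arguments Atom {d A} a.
Arguments Comp {d A IL} L hL {IR} R hR.

Definition is_atom d (A : porderType d) (G : game A) : Prop :=
  match G with Atom _ => True | Comp _ _ _ _ _ _ => False end.

Fixpoint cmp d (A : porderType d) (G : game A) {struct G} : game A -> Prop * Prop :=
  fix cmpG (H : game A) {struct H} : Prop * Prop :=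
    let lhdGH : Prop :=
      (match G with
       | Atom _ => False
       | Comp _ _ _ _ GR _ => exists j, (cmp (GR j) H).1
       end) \/
      (match H with
       | Atom _ => False
       | Comp _ HL _ _ _ _ => exists i, (cmpG (HL i)).1
       end) \/
      (match G, H with
       | Atom a, Atom b => a <= b
       | _, _ => False
       end) in
    let leGH : Prop :=
      (match G with
       | Atom _ => True
       | Comp _ GL _ _ _ _ => forall i, (cmp (GL i) H).2
       end) /\
      (match H with
       | Atom _ => True
       | Comp _ _ _ _ HR _ => forall j, (cmpG (HR j)).2
       end) /\
      ((is_atom G \/ is_atom H) -> lhdGH) in
    (leGH, lhdGH).

Definition gle d (A : porderType d) (G H : game A) : Prop := (cmp G H).1.
Definition glhd d (A : porderType d) (G H : game A) : Prop := (cmp G H).2.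

Fixpoint passable d (A : porderType d) (G : game A) : Prop :=
  glhd G G /\
  match G with
  | Atom _ => True
  | Comp _ GL _ _ GR _ => (forall i, passable (GL i)) /\ (forall j, passable (GR j))
  end.

(* Both parts go by induction on H; for atomic H they are the totality of the
   order.  For H = {L | R} the induction hypothesis compares [a] with every
   option, and the only case not settled at once is when every H^L <| [a] and
   [a] <| every H^R.  Passability H <| H then gives H^R <= H or H <= H^L, and
   the mixed transitivity laws turn this into [a] <| H^R <= H, so [a] <= some
   H^L (an atom has no right options), or H <= H^L <| [a], so some H^R <= [a]:
   a contradiction either way.  Transitivity holds over any poset, by
   simultaneous induction on the three games. *)

From mathcomp Require Import all_boot all_order.
From Stdlib Require Import Classical.
Import Order.TTheory.
Local Open Scope order_scope.

Section Games.

Variables (d : Order.disp_t) (A : porderType d).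
Implicit Types (a b : A) (G H K X Y Z : game A).

Definition left_opt G K : Prop :=
  if G is Comp _ L _ _ _ _ then exists i, K = L i else False.
Definition right_opt G K : Prop :=
  if G is Comp _ _ _ _ R _ then exists j, K = R j else False.

Lemma gle_unfold G H :
  gle G H =
    ((if G is Comp _ GL _ _ _ _ then forall i, glhd (GL i) H else True) /\
     (if H is Comp _ _ _ _ HR _ then forall j, glhd G (HR j) else True) /\
     (is_atom G \/ is_atom H -> glhd G H)).
Proof. by case: G; case: H. Qed.

Lemma glhd_unfold G H :
  glhd G H =
    ((if G is Comp _ _ _ _ GR _ then exists j, gle (GR j) H else False) \/
     (if H is Comp _ HL _ _ _ _ then exists i, gle G (HL i) else False) \/
     (if G is Atom a then if H is Atom b then a <= b else False else False)).
Proof. by case: G; case: H. Qed.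

Lemma gleP G H :
  gle G H <-> [/\ forall K, left_opt G K -> glhd K H,
                  forall K, right_opt H K -> glhd G K &
                  is_atom G \/ is_atom H -> glhd G H].
Proof.
rewrite gle_unfold; split=> [[hL [hR hA]]|[hL hR hA]]; split=> //.
- by case: G hL hR hA => // IL L hL' IR R hR' hL _ _ _ [i ->].
- by case: H hL hR hA => // IL L hL' IR R hR' _ hR _ _ [j ->].
- by case: G hL hR hA => // IL L hL' IR R hR' hL _ _ i; apply: hL; exists i.
- split=> //; case: H hL hR hA => // IL L hL' IR R hR' _ hR _ j.
  by apply: hR; exists j.
Qed.

Lemma glhdP G H :
  glhd G H <-> [\/ exists2 K, right_opt G K & gle K H,
                   exists2 K, left_opt H K & gle G K |
                   exists a b, [/\ G = Atom a, H = Atom b & a <= b]].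
Proof.
rewrite glhd_unfold; split=> [[hR|[hL|hA]]|[[K oK KH]|[K oK GK]|[a [b [-> -> ab]]]]].
- case: G hR => // IL L hL IR R hR [j jH].
  by apply: Or31; exists (R j) => //; exists j.
- case: H hL => // IL L hL IR R hR [i Gi].
  by apply: Or32; exists (L i) => //; exists i.
- by case: G hA => // a; case: H => // b ab; apply: Or33; exists a, b.
- by case: G oK => // IL L hL IR R hR [j eK]; left; exists j; rewrite -eK.
- by case: H oK => // IL L hL IR R hR [i eK]; right; left; exists i; rewrite -eK.
- by right; right.
Qed.

Lemma glhd_atom a b : glhd (Atom a) (Atom b) <-> a <= b.
Proof. by rewrite glhd_unfold; split=> [[|[|]]|] //; right; right. Qed.

Lemma gle_atom a b : gle (Atom a) (Atom b) <-> a <= b.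
Proof.
rewrite gle_unfold; split=> [[_ [_ aAb]]|ab].
  by apply/glhd_atom/aAb; left.
by split=> //; split=> // _; apply/glhd_atom.
Qed.

Definition opt G K := left_opt G K \/ right_opt G K.

Lemma game_opt_ind (P : game A -> Prop) :
  (forall G, (forall K, opt G K -> P K) -> P G) -> forall G, P G.
Proof.
move=> IH; elim=> [a|IL L IHL hL IR R IHR hR]; apply: IH => K.
  by case=> [[]|[]].
by case=> [[i ->]|[j ->]].
Qed.

Definition transitive_at X Y Z :=
  [/\ gle X Y -> gle Y Z -> gle X Z,
      glhd X Y -> gle Y Z -> glhd X Z &
      gle X Y -> glhd Y Z -> glhd X Z].

Section TransitivityStep.

Variables X Y Z : game A.
Hypothesis IHX : forall K, opt X K -> forall Y Z, transitive_at K Y Z.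
Hypothesis IHY : forall K, opt Y K -> forall Z, transitive_at X K Z.
Hypothesis IHZ : forall K, opt Z K -> transitive_at X Y K.

Lemma glhd_gle_trans_step : glhd X Y -> gle Y Z -> glhd X Z.
Proof.
move=> /glhdP[[K oK KY]|[K oK XK]|[a [b [eX eY ab]]]] YZ.
- apply/glhdP/Or31; exists K => //.
  by case: (IHX _ (or_intror oK) Y Z) => + _ _; apply.
- have [_ _ trans] := IHY _ (or_introl oK) Z.
  by apply: trans XK _; case/gleP: YZ => + _ _; apply.
have /glhdP[[K []]|[K oK bK]|[b' [c [[<-] eZ bc]]]] : glhd (Atom b) Z.
  by rewrite -eY; case/gleP: YZ => _ _; apply; left; rewrite eY.
- apply/glhdP/Or32; exists K => //.
  case: (IHZ _ (or_introl oK)) => + _ _; rewrite eX eY; apply => //.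
  exact/gle_atom.
- by apply/glhdP/Or33; exists a, c; split=> //; apply: le_trans bc.
Qed.

Lemma gle_glhd_trans_step : gle X Y -> glhd Y Z -> glhd X Z.
Proof.
move=> XY /glhdP[[K oK KZ]|[K oK YK]|[b [c [eY eZ bc]]]].
- have [_ trans _] := IHY _ (or_intror oK) Z.
  by apply: trans KZ; case/gleP: XY => _ + _; apply.
- apply/glhdP/Or32; exists K => //.
  by case: (IHZ _ (or_introl oK)) => + _ _; apply.
have /glhdP[[K oK Kb]|[K []]|[a [b' [eX [<-] ab]]]] : glhd X (Atom b).
  by rewrite -eY; case/gleP: XY => _ _; apply; right; rewrite eY.
- apply/glhdP/Or31; exists K => //.
  case: (IHX _ (or_intror oK) Y Z) => + _ _; rewrite eY eZ; apply => //.
  exact/gle_atom.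
- by apply/glhdP/Or33; exists a, c; split=> //; apply: le_trans bc.
Qed.

Lemma gle_trans_step : gle X Y -> gle Y Z -> gle X Z.
Proof.
move=> XY YZ; apply/gleP; split.
- move=> K oK; have [_ trans _] := IHX _ (or_introl oK) Y Z.
  by apply: trans YZ; case/gleP: XY => + _ _; apply.
- move=> K oK; have [_ _ trans] := IHZ _ (or_intror oK).
  by apply: trans XY _; case/gleP: YZ => _ + _; apply.
case=> atomic.
- by apply: glhd_gle_trans_step YZ; case/gleP: XY => _ _; apply; left.
- by apply: gle_glhd_trans_step XY _; case/gleP: YZ => _ _; apply; right.
Qed.

End TransitivityStep.

Lemma game_transitive X Y Z : transitive_at X Y Z.
Proof.
elim/game_opt_ind: X Y Z => X IHX Y; elim/game_opt_ind: Y => Y IHY Z.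
elim/game_opt_ind: Z => Z IHZ.
split; [exact: gle_trans_step | exact: glhd_gle_trans_step | exact: gle_glhd_trans_step].
Qed.

Lemma glhd_gle_trans X Y Z : glhd X Y -> gle Y Z -> glhd X Z.
Proof. by case: (game_transitive X Y Z). Qed.

Lemma gle_glhd_trans X Y Z : gle X Y -> glhd Y Z -> glhd X Z.
Proof. by case: (game_transitive X Y Z). Qed.

Section AtomVersusComposite.

Variables (a : A) (IL IR : Type) (L : IL -> game A) (R : IR -> game A).
Variables (hL : inhabited IL) (hR : inhabited IR).
Let H := Comp L hL R hR.

Lemma glhd_atom_compP : glhd (Atom a) H <-> exists i, gle (Atom a) (L i).
Proof.
split=> [/glhdP[[K []]|[K [i ->] aLi]|[? [? [_ //]]]]|[i aLi]]; first by exists i.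
by apply/glhdP/Or32; exists (L i) => //; exists i.
Qed.

Lemma glhd_comp_atomP : glhd H (Atom a) <-> exists j, gle (R j) (Atom a).
Proof.
split=> [/glhdP[[K [j ->] Rja]|[K []]|[? [? [//]]]]|[j Rja]]; first by exists j.
by apply/glhdP/Or31; exists (R j) => //; exists j.
Qed.

Lemma gle_comp_atom :
  (forall i, glhd (L i) (Atom a)) -> (exists j, gle (R j) (Atom a)) ->
  gle H (Atom a).
Proof.
move=> La Ra; apply/gleP; split=> [K [i ->] //|K []|_].
exact/glhd_comp_atomP.
Qed.

Lemma gle_atom_comp :
  (forall j, glhd (Atom a) (R j)) -> (exists i, gle (Atom a) (L i)) ->
  gle (Atom a) H.
Proof.
move=> aR aL; apply/gleP; split=> [K []|K [j ->] //|_].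
exact/glhd_atom_compP.
Qed.

Lemma self_glhd_atom_option :
  glhd H H -> (forall i, glhd (L i) (Atom a)) -> (forall j, glhd (Atom a) (R j)) ->
  (exists i, gle (Atom a) (L i)) \/ (exists j, gle (R j) (Atom a)).
Proof.
move=> /glhdP[[K [j ->] RjH]|[K [i ->] HLi]|[? [? [//]]]] La aR.
- by left; apply/glhd_atom_compP; apply: glhd_gle_trans (aR j) RjH.
- by right; apply/glhd_comp_atomP; apply: gle_glhd_trans HLi (La i).
Qed.

Lemma comp_atom_cmp :
  (forall i, glhd (L i) (Atom a) \/ gle (Atom a) (L i)) ->
  (forall j, glhd (Atom a) (R j) \/ gle (R j) (Atom a)) ->
  glhd H H ->
  (glhd (Atom a) H \/ gle H (Atom a)) /\ (glhd H (Atom a) \/ gle (Atom a) H).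
Proof.
move=> cmpL cmpR HH.
have glhdL : ~ (exists i, gle (Atom a) (L i)) -> forall i, glhd (L i) (Atom a).
  by move=> naL i; case: (cmpL i) => // aLi; case: naL; exists i.
have glhdR : ~ (exists j, gle (R j) (Atom a)) -> forall j, glhd (Atom a) (R j).
  by move=> nRa j; case: (cmpR j) => // Rja; case: nRa; exists j.
have [aL|naL] := classic (exists i, gle (Atom a) (L i));
have [Ra|nRa] := classic (exists j, gle (R j) (Atom a)).
- by split; left; [apply/glhd_atom_compP | apply/glhd_comp_atomP].
- split; [left; exact/glhd_atom_compP | right; exact: gle_atom_comp (glhdR nRa) aL].
- split; [right; exact: gle_comp_atom (glhdL naL) Ra | left; exact/glhd_comp_atomP].
- by case: (self_glhd_atom_option HH (glhdL naL) (glhdR nRa)).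
Qed.

End AtomVersusComposite.

End Games.

Theorem lemma7p1 (d : Order.disp_t) (A : orderType d) (a : A) (H : game A) :
  passable H ->
  (glhd (Atom a) H \/ gle H (Atom a)) /\ (glhd H (Atom a) \/ gle (Atom a) H).
Proof.
elim: H => [b _|IL L IHL hL IR R IHR hR [HH [passL passR]]].
  case/orP: (le_total a b) => [ab|ba].
  - by split; [left; apply/glhd_atom | right; apply/gle_atom].
  - by split; [right; apply/gle_atom | left; apply/glhd_atom].
apply: comp_atom_cmp HH.
- by move=> i; case: (IHL i (passL i)).
- by move=> j; case: (IHR j (passR j)).
Qed.
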